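(* Let $V$ be an $\mathbb{N}$-graded vertex algebra. For an $A(V)$-module map $f:M_1\to M_2$, the map $\mathrm{id}\otimes f:T(V[t,t^{-1}])\otimes M_1\to T(V[t,t^{-1}])\otimes M_2$ induces a well-defined linear map $S(f):S(M_1)\to S(M_2)$, which is a map of $V$-modules. The correspondence sending an $A(V)$-module $M$ to the $\mathbb{N}$-gradable weak $V$-module $(S(M),Y_{S(M)})$ and an $A(V)$-module map $f$ to $S(f)$ is a functor from the category of $A(V)$-modules to the category of $\mathbb{N}$-gradable weak $V$-modules.
   Context: An $\mathbb{N}$-graded vertex algebra is a vertex algebra $(V,Y,\mathbf{1})$ with $V=\coprod_{n\in\mathbb{Z}}V_{(n)}$, $V_{(n)}=0$ for $n<0$, and $[d,Y(u,x)]=x\frac{d}{dx}Y(u,x)+Y(du,x)$ where $du=nu$ for $u\in V_{(n)}$; write $\mathrm{wt}\,u=n$ for $u\in V_{(n)}$, $Y(u,x)=\sum_nu_nx^{-n-1}$, and $L(0)=d$, so $x^{L(0)}u=x^{\mathrm{wt}\,u}u$ for homogeneous $u$. An $\mathbb{N}$-gradable weak $V$-module is a module $W=\coprod_{n\in\mathbb{N}}W_{(n)}$ for the vertex algebra $V$ such that for $u\in V_{(m)}$, $u_n=\mathrm{Res}_xx^nY_W(u,x)$ maps $W_{(j)}$ to $W_{(j+m-n-1)}$; morphisms are linear maps commuting with vertex operators. Zhu's algebra: $O(V)$ is the span of $\mathrm{Res}_xx^nY((x+1)^{L(0)}u,x)v$ for $u,v\in V$, $n\le-2$; $A(V)=V/O(V)$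 with the associative product $u*v=\mathrm{Res}_xx^{-1}Y((x+1)^{L(0)}u,x)v$. Construction of $S(M)$ for an $A(V)$-module $M$ with representation $\rho$: in $V[t,t^{-1}]=V\otimes\mathbb{C}[t,t^{-1}]$ write $u(m)=u\otimes t^m$; let $T(V[t,t^{-1}])$ be its tensor algebra and consider the left module $T(V[t,t^{-1}])\otimes M$, spanned by $u_1(m_1)\cdots u_r(m_r)w$ ($w\in M$) of degree $\sum_i(\mathrm{wt}\,u_i-m_i-1)$ for homogeneous $u_i$. Put $Y_t(u,x)=\sum_mu(m)x^{-m-1}$, $o_t(u)=u(\mathrm{wt}\,u-1)$ for homogeneous $u$. Let $\mathcal{I}$ be the $T(V[t,t^{-1}])$-submodule generated by: (1) $u(m)w$ for homogeneous $u$ and homogeneous $w\in T(V[t,t^{-1}])\otimes M$ with $\mathrm{wt}\,u-m-1+\deg w<0$; (2) $o_t(u)w-\rho(u+O(V))w$ for $u\in V$, $w\in M$; (3) $u(p)v(q)w-\sum_{i=0}^{\mathrm{wt}\,v+\deg w-q-1}\sum_{j=0}^{\mathrm{wt}\,u+\deg w}\binom{p-\mathrm{wt}\,u-\deg w}{i}\binom{\mathrm{wt}\,u+\deg w}{j}(u_{p-\mathrm{wt}\,u-\deg w-i+j}v)(q+\mathrm{wt}\,u+\deg w+i-j)w$ for homogeneous $u,v$, homogeneous $w$, $p,q\in\mathbb{Z}$ with $\mathrm{wt}\,v+\deg w>q$ and $\mathrm{wt}\,u-p-1+\mathrm{wt}\,v-q-1+\deg w\ge0$. Let $S_1(M)=(T(V[t,t^{-1}])\otimes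 M)/\mathcal{I}$ with $Y_{S_1(M)}$ induced by $Y_t$. Let $\mathcal{J}$ be the $T(V[t,t^{-1}])$-submodule of $S_1(M)$ generated by $\sum_{j=0}^{\mathrm{wt}\,u+\deg w}\binom{\mathrm{wt}\,u+\deg w}{j}(u_{p-i-j}v)(q+i+j)w$ (i.e. $\mathrm{Res}_{x_0}\mathrm{Res}_{x_2}x_0^{p-\mathrm{wt}\,u-\deg w-i}x_2^{q+i}(x_0+x_2)^{\mathrm{wt}\,u+\deg w}Y_{S_1(M)}(Y(u,x_0)v,x_2)w$) for homogeneous $u,v\in V$, homogeneous $w\in S_1(M)$, $p,q\in\mathbb{Z}$, integers $i\ge\mathrm{wt}\,v+\deg w-q$. Then $S(M)=S_1(M)/\mathcal{J}$ with $Y_{S(M)}$ induced by $Y_t$; it is an $\mathbb{N}$-gradable weak $V$-module. *)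

From mathcomp Require Import all_boot all_algebra.
From mathcomp Require Import reals.
From mathcomp Require Import complex.
Set Implicit Arguments.
Unset Strict Implicit.
Unset Printing Implicit Defensive.
Import GRing.Theory Num.Theory.
Local Open Scope ring_scope.

Definition toN (z : int) : nat := if z is Posz n then n else 0%N.

(* generalized binomial coefficient binom(a, i) for a : int, i : nat *)
Definition binz (a : int) (i : nat) : int :=
  match a with
  | Posz n => ('C(n, i))%:Z
  | Negz n => (-1) ^+ i * ('C(n + i, i))%:Z   (* a = -(n+1) *)
  end.

Section VA.
Variable K : fieldType.

Section VAdef.
Variable V : lmodType K.
(* Y u n v = u_n v,  where Y(u,x) = sum_n u_n x^{-n-1} *)
Variable Y : V -> int -> V -> V.
Variable vac : V.
Variable Vn : int -> V -> Prop.

Definition is_subspace (S : V -> Prop) :=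
  S 0 /\ forall (a : K) x y, S x -> S y -> S (a *: x + y).

Definition is_vertex_algebra : Prop :=
  [/\ (forall n v a u u', Y (a *: u + u') n v = a *: Y u n v + Y u' n v) /\
      (forall n u a v v', Y u n (a *: v + v') = a *: Y u n v + Y u n v'),
      (forall u v, exists N : int, forall n, N <= n -> Y u n v = 0),
      (* vacuum property: Y(1,x) = id *)
      (forall n v, Y vac n v = (if n == -1 then v else 0)),
      (* creation property: Y(u,x)1 in V[[x]], Y(u,x)1|_{x=0} = u *)
      ((forall u n, 0 <= n -> Y u n vac = 0) /\ (forall u, Y u (-1) vac = u)) &
      (* Jacobi identity, in components (Borcherds identity); both sides are
         finite sums, expressed as eventually-stable partial sums *)
      forall u v w (p q r : int), exists N : nat, forall M : nat, (N <= M)%N ->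
        \sum_(i < M) (binz p i)%:~R *: Y (Y u (r + i%:Z) v) (p + q - i%:Z) w =
        \sum_(i < M) ((-1) ^+ i * (binz r i)%:~R) *:
           (Y u (p + r - i%:Z) (Y v (q + i%:Z) w)
            - (-1) ^+ (absz r) *: Y v (q + r - i%:Z) (Y u (p + i%:Z) w)) ].

(* V = coprod_{n in Z} V_(n), V_(n) = 0 for n < 0, and
   [d, Y(u,x)] = x d/dx Y(u,x) + Y(du,x), stated componentwise:
   for u in V_(k), v in V_(l):  u_n v in V_(k + l - n - 1). *)
Definition is_N_grading : Prop :=
  [/\ (forall n, is_subspace (Vn n)),
      (forall n v, n < 0 -> Vn n v -> v = 0),
      (forall v, exists (s : seq int) (F : int -> V),
          (forall n, Vn n (F n)) /\ v = \sum_(n <- s) F n),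
      (forall (s : seq int) (F : int -> V), uniq s ->
          (forall n, Vn n (F n)) -> \sum_(n <- s) F n = 0 ->
          forall n, n \in s -> F n = 0) &
      (forall k l n u v, Vn k u -> Vn l v -> Vn (k + l - n - 1) (Y u n v)) ].

Definition is_NgradedVA : Prop := is_vertex_algebra /\ is_N_grading.

(* For homogeneous u of weight k:
   Res_x x^n Y((x+1)^{L(0)} u, x) v = sum_{j=0}^{k} binom(k,j) u_{n+j} v. *)
Definition zhu_res (k : int) (n : int) (u v : V) : V :=
  \sum_(j < toN (k + 1)) (binz k j)%:~R *: Y u (n + j%:Z) v.

(* O(V): span of the Res_x x^n Y((x+1)^{L(0)}u,x)v, n <= -2 (by linearity in u
   it suffices to take homogeneous u) *)
Definition in_OV (x : V) : Prop :=
  forall S : V -> Prop, is_subspace S ->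
    (forall k n u v, Vn k u -> n <= -2 -> S (zhu_res k n u v)) -> S x.

(* u * v = Res_x x^{-1} Y((x+1)^{L(0)}u, x) v, for homogeneous u of weight k *)
Definition zhu_star (k : int) (u v : V) : V := zhu_res k (-1) u v.

(* An A(V)-module: a (unital) module for the associative algebra V/O(V),
   given by rho : V -> End(M) factoring through V/O(V). *)
Definition is_AV_module (M : lmodType K) (rho : V -> M -> M) : Prop :=
  [/\ (forall a u u' w, rho (a *: u + u') w = a *: rho u w + rho u' w),
      (forall u a w w', rho u (a *: w + w') = a *: rho u w + rho u w'),
      (forall x w, in_OV x -> rho x w = 0),
      (forall k u v w, Vn k u -> rho (zhu_star k u v) w = rho u (rho v w)) &
      (forall w, rho vac w = w) ].

Definition is_AV_hom (M1 M2 : lmodType K) (rho1 : V -> M1 -> M1)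
    (rho2 : V -> M2 -> M2) (f : M1 -> M2) : Prop :=
  (forall a w w', f (a *: w + w') = a *: f w + f w') /\
  (forall u w, f (rho1 u w) = rho2 u (f w)).

Section SM.
Variable M : lmodType K.
Variable rho : V -> M -> M.

(* a word u_1(m_1)...u_r(m_r) w is a key (list of letters, w) *)
Definition key := (seq (V * int) * M)%type.
(* the free vector space on keys: finite formal K-linear combinations,
   identified when all their coefficients agree (see fs_eq) *)
Definition FS := seq (K * key).

Definition fs_coef (x : FS) (k : key) : K :=
  \sum_(p <- x) (if p.2 == k then p.1 else 0).
Definition fs_eq (x y : FS) : Prop := forall k, fs_coef x k = fs_coef y k.
Definition fs_add (x y : FS) : FS := x ++ y.
Definition fs_scale (a : K) (x : FS) : FS := [seq (a * p.1, p.2) | p <- x].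
Definition fs_sub (x y : FS) : FS := x ++ fs_scale (-1) y.
Definition fs_sum (n : nat) (F : nat -> FS) : FS :=
  flatten [seq F i | i <- iota 0 n].
Definition fs_word (s : seq (V * int)) (w : M) : FS := [:: (1, (s, w))].

(* left action of the letter u(m) = u (x) t^m of T(V[t,t^-1]) *)
Definition lmul (u : V) (m : int) (x : FS) : FS :=
  [seq (p.1, ((u, m) :: p.2.1, p.2.2)) | p <- x].

(* homogeneity of words: all letters homogeneous, and
   deg u_1(m_1)...u_r(m_r) w = sum_i (wt u_i - m_i - 1) (w in M has degree 0) *)
Fixpoint hom_word (d : int) (s : seq (V * int)) : Prop :=
  match s with
  | [::] => d = 0
  | (u, m) :: s' => exists k, Vn k u /\ hom_word (d - (k - m - 1)) s'
  end.
Definition hom_fs (d : int) (x : FS) : Prop :=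
  forall p, p \in x -> hom_word d p.2.1.

(* generators of the kernel of T(V[t,t^-1]) (x) M -> S(M) *)
Inductive gen : FS -> Prop :=
  (* multilinearity of the tensor product T(V[t,t^-1]) (x) M *)
  | gen_lin_letter s1 s2 (a : K) u u' m w :
      gen [:: (1, (s1 ++ (a *: u + u', m) :: s2, w));
              (- a, (s1 ++ (u, m) :: s2, w));
              (-1, (s1 ++ (u', m) :: s2, w))]
  | gen_lin_M s (a : K) w w' :
      gen [:: (1, (s, a *: w + w')); (- a, (s, w)); (-1, (s, w'))]
  | gen_1 k u m d x :
      Vn k u -> hom_fs d x -> k - m - 1 + d < 0 -> gen (lmul u m x)
  (* (2) o_t(u) w - rho(u + O(V)) w *)
  | gen_2 k u w :
      Vn k u -> gen (fs_sub (fs_word [:: (u, k - 1)] w) (fs_word [::] (rho u w)))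
  | gen_3 k l u v d x (p q : int) :
      Vn k u -> Vn l v -> hom_fs d x -> q < l + d ->
      0 <= k - p - 1 + (l - q - 1) + d ->
      gen (fs_sub (lmul u p (lmul v q x))
             (fs_sum (toN (l + d - q)) (fun i =>
                fs_sum (toN (k + d + 1)) (fun j =>
                  fs_scale ((binz (p - k - d) i)%:~R * (binz (k + d) j)%:~R)
                    (lmul (Y u (p - k - d - i%:Z + j%:Z) v)
                          (q + k + d + i%:Z - j%:Z) x)))))
  (* generators of J (taken on homogeneous representatives in
     T(V[t,t^-1]) (x) M of homogeneous elements of S_1(M)) *)
  | gen_J k l u v d x (p q i : int) :
      Vn k u -> Vn l v -> hom_fs d x -> l + d - q <= i ->
      gen (fs_sum (toN (k + d + 1)) (fun j =>
             fs_scale (binz (k + d) j)%:~R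
               (lmul (Y u (p - i - j%:Z) v) (q + i + j%:Z) x))).

Definition fs_submodule (N : FS -> Prop) : Prop :=
  [/\ (forall x y, fs_eq x y -> N x -> N y),
      N [::],
      (forall x y, N x -> N y -> N (fs_add x y)),
      (forall a x, N x -> N (fs_scale a x)) &
      (forall u m x, N x -> N (lmul u m x)) ].

(* the T(V[t,t^-1])-submodule generated by gen: the kernel of the projection
   onto S(M) = S_1(M)/J, with S_1(M) = (T(V[t,t^-1]) (x) M)/I *)
Definition kerS (x : FS) : Prop :=
  forall N, fs_submodule N -> (forall g, gen g -> N g) -> N x.

Definition S_eq (x y : FS) : Prop := kerS (fs_sub x y).

End SM.

(* id (x) f on representatives *)
Definition S_map (M1 M2 : lmodType K) (f : M1 -> M2) (x : FS M1) : FS M2 :=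
  [seq (p.1, (p.2.1, f p.2.2)) | p <- x].

End VAdef.
End VA.

From mathcomp Require Import all_boot all_algebra.
From mathcomp Require Import reals.
From mathcomp Require Import complex.
Set Implicit Arguments.
Unset Strict Implicit.
Unset Printing Implicit Defensive.
Import GRing.Theory Num.Theory.
Local Open Scope ring_scope.

(* S(f) acts on representatives only through the module letter of each word, so
   it commutes with all the free-space operations.  Since f is linear and
   intertwines the A(V)-actions, it sends every generator of the kernel over M1
   to a generator of the same kind over M2; hence the preimage of the kernel
   over M2 is a T(V[t,t^-1])-submodule containing the generators, so it
   contains the kernel over M1.  Functoriality holds already on
   representatives. *)

Section FreeSpace.
Variables (K : fieldType) (V : lmodType K) (Y : V -> int -> V -> V).
Variable Vn : int -> V -> Prop.
Variables (M : lmodType K) (rho : V -> M -> M).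

Lemma fs_coef_cat (x y : FS V M) k : fs_coef (x ++ y) k = fs_coef x k + fs_coef y k.
Proof. by rewrite /fs_coef big_cat. Qed.

Lemma fs_coef_scale a (x : FS V M) k : fs_coef (fs_scale a x) k = a * fs_coef x k.
Proof.
rewrite /fs_coef big_map mulr_sumr; apply: eq_bigr => p _ /=.
by case: ifP; rewrite ?mulr0.
Qed.

(* Coefficients only see the multiset of keys, so any duplicate-free list of
   keys covering those of [x] can index the sum instead. *)
Lemma fs_coef_sum_keys (L : seq (key V M)) (F : key V M -> K) (x : FS V M) :
  uniq L -> {subset map snd x <= L} ->
  \sum_(p <- x) F p.2 * p.1 = \sum_(k <- L) F k * fs_coef x k.
Proof.
move=> uL; elim: x => [|p x IH] sub.
  by rewrite big_nil big1 // => k _; rewrite /fs_coef big_nil mulr0.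
rewrite big_cons IH; last by move=> k kx; apply: sub; rewrite /= inE kx orbT.
rewrite /fs_coef; under [RHS]eq_bigr do rewrite big_cons mulrDr.
rewrite big_split /=; congr (_ + _).
have pL : p.2 \in L by apply: sub; rewrite /= inE eqxx.
rewrite (bigD1_seq p.2) //= eqxx big1 ?addr0 // => k /negPf nk.
by rewrite eq_sym nk mulr0.
Qed.

Lemma eq_fs_sum n (F G : nat -> FS V M) :
  (forall i, F i = G i) -> fs_sum n F = fs_sum n G.
Proof. by move=> FG; congr flatten; apply: eq_map. Qed.

Lemma kerS_submodule : fs_submodule (kerS Y Vn rho).
Proof.
split.
- by move=> x y e hx N hN hg; case: (hN) => c _ _ _ _; exact: c e (hx N hN hg).
- by move=> N [_ ? _ _ _] _.
- by move=> x y hx hy N hN hg; case: (hN) => _ _ c _ _; exact: c (hx N hN hg) (hy N hN hg).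
- by move=> a x hx N hN hg; case: (hN) => _ _ _ c _; exact: c (hx N hN hg).
- by move=> u m x hx N hN hg; case: (hN) => _ _ _ _ c; exact: c (hx N hN hg).
Qed.

Lemma kerS_gen (x : FS V M) : gen Y Vn rho x -> kerS Y Vn rho x.
Proof. by move=> h N _ hg; apply: hg. Qed.

Lemma S_eq_refl (x : FS V M) : S_eq Y Vn rho x x.
Proof.
have [closed ker0 _ _ _] := kerS_submodule.
apply: closed ker0 => k.
by rewrite /fs_sub fs_coef_cat fs_coef_scale /fs_coef big_nil mulN1r subrr.
Qed.

End FreeSpace.

Section SMap.
Variables (K : fieldType) (V : lmodType K) (Vn : int -> V -> Prop).
Variables (M1 M2 : lmodType K) (f : M1 -> M2).

Lemma S_map_cat (x y : FS V M1) : S_map f (x ++ y) = S_map f x ++ S_map f y.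
Proof. exact: map_cat. Qed.

Lemma S_map_scale a (x : FS V M1) : S_map f (fs_scale a x) = fs_scale a (S_map f x).
Proof. by rewrite /S_map /fs_scale -!map_comp. Qed.

Lemma S_map_lmul u m (x : FS V M1) : S_map f (lmul u m x) = lmul u m (S_map f x).
Proof. by rewrite /S_map /lmul -!map_comp. Qed.

Lemma S_map_sub (x y : FS V M1) : S_map f (fs_sub x y) = fs_sub (S_map f x) (S_map f y).
Proof. by rewrite /fs_sub S_map_cat S_map_scale. Qed.

Lemma S_map_sum n (F : nat -> FS V M1) :
  S_map f (fs_sum n F) = fs_sum n (fun i => S_map f (F i)).
Proof. by rewrite /fs_sum /S_map map_flatten -!map_comp. Qed.

Lemma hom_fs_S_map d (x : FS V M1) : hom_fs Vn d x -> hom_fs Vn d (S_map f x).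
Proof. by move=> h p /mapP [q qx ->]; apply: h. Qed.

Lemma fs_coef_S_map (x : FS V M1) k :
  fs_coef (S_map f x) k = \sum_(p <- x) (if (p.2.1, f p.2.2) == k then 1 else 0) * p.1.
Proof.
rewrite /fs_coef big_map; apply: eq_bigr => p _ /=.
by case: ifP; rewrite ?mul1r ?mul0r.
Qed.

Lemma fs_eq_S_map (x y : FS V M1) : fs_eq x y -> fs_eq (S_map f x) (S_map f y).
Proof.
move=> e k; rewrite !fs_coef_S_map.
set L := undup (map snd (x ++ y)).
have [uL xL yL] : [/\ uniq L, {subset map snd x <= L} & {subset map snd y <= L}].
  by split=> [|q qx|q qy]; rewrite ?undup_uniq // mem_undup map_cat mem_cat ?qx ?qy ?orbT.
rewrite !(fs_coef_sum_keys (fun k' : key V M1 => if (k'.1, f k'.2) == k then 1 else 0) uL) //.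
by apply: eq_bigr => q _; rewrite e.
Qed.

End SMap.

Lemma S_map_id (K : fieldType) (V : lmodType K) (M : lmodType K) (x : FS V M) :
  S_map id x = x.
Proof. by elim: x => [|[c [s w]] x IH] //=; rewrite IH. Qed.

Lemma S_map_comp (K : fieldType) (V : lmodType K) (M1 M2 M3 : lmodType K)
    (f : M1 -> M2) (g : M2 -> M3) (x : FS V M1) :
  S_map (g \o f) x = S_map g (S_map f x).
Proof. by rewrite /S_map -map_comp. Qed.

Section WellDefined.
Variables (K : fieldType) (V : lmodType K) (Y : V -> int -> V -> V).
Variable Vn : int -> V -> Prop.
Variables (M1 M2 : lmodType K) (rho1 : V -> M1 -> M1) (rho2 : V -> M2 -> M2).
Variable f : M1 -> M2.
Hypothesis f_linear : forall a w w', f (a *: w + w') = a *: f w + f w'.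
Hypothesis f_intertwines : forall u w, f (rho1 u w) = rho2 u (f w).

Lemma gen_S_map (z : FS V M1) : gen Y Vn rho1 z -> gen Y Vn rho2 (S_map f z).
Proof.
case=> [s1 s2 a u u' m w|s a w w'|k u m d x hu hx hd|k u w hu
       |k l u v d x p q hu hv hx hq hdeg|k l u v d x p q i hu hv hx hi].
- exact: gen_lin_letter.
- by rewrite /S_map /= f_linear; apply: gen_lin_M.
- by rewrite S_map_lmul; apply: gen_1 _ _ hu (hom_fs_S_map (f:=f) hx) hd.
- by rewrite S_map_sub /S_map /= f_intertwines; apply: gen_2 _ _ hu.
- rewrite S_map_sub !S_map_lmul S_map_sum.
  under eq_fs_sum => i.
    by rewrite S_map_sum; under eq_fs_sum => j do rewrite S_map_scale S_map_lmul; over.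
  exact: gen_3 _ _ hu hv (hom_fs_S_map (f:=f) hx) hq hdeg.
- rewrite S_map_sum; under eq_fs_sum => j do rewrite S_map_scale S_map_lmul.
  exact: gen_J _ _ hu hv (hom_fs_S_map (f:=f) hx) hi.
Qed.

Lemma kerS_S_map (z : FS V M1) : kerS Y Vn rho1 z -> kerS Y Vn rho2 (S_map f z).
Proof.
have [closed ker0 kerD kerZ kerT] := kerS_submodule Y Vn rho2.
move=> hz; apply: (hz (fun z => kerS Y Vn rho2 (S_map f z))) => [|g hg /=].
  split=> [x y e|//|x y|a x|u m x] /=.
  - exact: closed (fs_eq_S_map f e).
  - by rewrite /fs_add S_map_cat; apply: kerD.
  - by rewrite S_map_scale; apply: kerZ.
  - by rewrite S_map_lmul; apply: kerT.
exact: kerS_gen (gen_S_map hg).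
Qed.

End WellDefined.

Theorem corollary4p2 (R : realType) (V : lmodType R[i])
    (Y : V -> int -> V -> V) (vac : V) (Vn : int -> V -> Prop)
    (HV : is_NgradedVA Y vac Vn)
    (M1 M2 M3 : lmodType R[i])
    (rho1 : V -> M1 -> M1) (rho2 : V -> M2 -> M2) (rho3 : V -> M3 -> M3)
    (H1 : is_AV_module Y vac Vn rho1) (H2 : is_AV_module Y vac Vn rho2)
    (H3 : is_AV_module Y vac Vn rho3)
    (f : M1 -> M2) (g : M2 -> M3)
    (Hf : is_AV_hom rho1 rho2 f) (Hg : is_AV_hom rho2 rho3 g) :
  (* S(f) is well defined on S(M_1) = T(V[t,t^-1]) (x) M_1 / kernel *)
  (forall x y, S_eq Y Vn rho1 x y -> S_eq Y Vn rho2 (S_map f x) (S_map f y)) /\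
  (* S(f) is linear *)
  (forall (a : R[i]) x y,
      S_eq Y Vn rho2 (S_map f (fs_add x (fs_scale a y)))
                     (fs_add (S_map f x) (fs_scale a (S_map f y)))) /\
  (* S(f) is a map of V-modules: it commutes with every component u(m)
     of Y_{S(M)}(u,x) = sum_m u(m) x^{-m-1} *)
  (forall u m x,
      S_eq Y Vn rho2 (S_map f (lmul u m x)) (lmul u m (S_map f x))) /\
  (* functoriality: S(id) = id and S(g o f) = S(g) o S(f) *)
  (forall x, S_eq Y Vn rho1 (S_map id x) x) /\
  (forall x, S_eq Y Vn rho3 (S_map (g \o f) x) (S_map g (S_map f x))).
Proof.
have [f_linear f_intertwines] := Hf.
split; [|split; [|split; [|split]]].
- by move=> x y hxy; rewrite /S_eq -S_map_sub; apply: kerS_S_map.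
- by move=> a x y; rewrite /fs_add S_map_cat S_map_scale; apply: S_eq_refl.
- by move=> u m x; rewrite S_map_lmul; apply: S_eq_refl.
- by move=> x; rewrite S_map_id; apply: S_eq_refl.
- by move=> x; rewrite S_map_comp; apply: S_eq_refl.
Qed.
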